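(* Let $L\in\mathcal{N}$ and assume that $L$ is isomorphic to a sublattice of a free lattice. Assume that $K$ is a sublattice of $L$ and $a\in L$ is an element such that $a\parallel b$ for all $b\in K$. Then $$\mathrm{Dec}(K)\le \bigl|\{a\vee b: b\in K\}\times\{a\wedge b: b\in K\}\bigr|.$$
   Context: $\mathcal{N}$ denotes the variety of lattices generated by the pentagon $N_5$. For elements $x,y$, $x\parallel y$ means neither $x\le y$ nor $y\le x$. A subset $S$ of a lattice $K$ is convex if $x,z\in S$, $y\in K$, $x\le y\le z$ imply $y\in S$; a convex distributive sublattice of $K$ is a sublattice of $K$ that is convex and is a distributive lattice. A set partition $\mathcal{F}$ of the set of elements of $K$ is called distributive if every $F\in\mathcal{F}$ is a convex distributive sublattice of $K$, and for all distinct $F_1,F_2\in\mathcal{F}$, either $F_1\cup F_2$ is not a sublattice of $K$, or $F_1\cup F_2$ is not a convex subset of $K$, or $F_1\cup F_2$ is a convex distributive sublattice of $K$. $\mathrm{Dec}(K)$ is the minimum cardinality of a distributive partition of $K$. *)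

From HB Require Import structures.
From mathcomp Require Import all_boot all_order.
Set Implicit Arguments. Unset Strict Implicit. Unset Printing Implicit Defensive.
Import Order.TTheory.
Local Open Scope order_scope.

Inductive lterm (X : Type) : Type :=
  | LVar of X
  | LJoin of lterm X & lterm X
  | LMeet of lterm X & lterm X.

Fixpoint teval (X T : Type) (j m : T -> T -> T) (v : X -> T) (t : lterm X) : T :=
  match t with
  | LVar x => v x
  | LJoin t1 t2 => j (teval j m v t1) (teval j m v t2)
  | LMeet t1 t2 => m (teval j m v t1) (teval j m v t2)
  end.

Definition lat_eval (d : Order.disp_t) (M : latticeType d) (X : Type)
  (v : X -> M) (t : lterm X) : M := teval (@Order.join d M) (@Order.meet d M) v t.

Inductive n5 : Type := N0 | Na | Nb | Nc | N1.

Definition n5_le (x y : n5) : bool :=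
  match x, y with
  | N0, _ => true
  | _, N1 => true
  | Na, Na | Na, Nc => true
  | Nb, Nb => true
  | Nc, Nc => true
  | _, _ => false
  end.

Definition n5_join (x y : n5) : n5 :=
  if n5_le x y then y else if n5_le y x then x else N1.
Definition n5_meet (x y : n5) : n5 :=
  if n5_le x y then x else if n5_le y x then y else N0.

(* L belongs to the variety N generated by N5: L satisfies every lattice
   identity (in countably many variables) that holds in N5. *)
Definition in_variety_N (d : Order.disp_t) (L : latticeType d) : Prop :=
  forall t s : lterm nat,
    (forall v : nat -> n5, teval n5_join n5_meet v t = teval n5_join n5_meet v s) ->
    forall v : nat -> L, lat_eval v t = lat_eval v s.

(* Two terms over X are equal in the free lattice FL(X) iff the identity
   t = s holds in every lattice. *)
Definition free_eq (X : Type) (t s : lterm X) : Prop :=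
  forall (d : Order.disp_t) (M : latticeType d) (v : X -> M),
    lat_eval v t = lat_eval v s.

(* L is isomorphic to a sublattice of a free lattice FL(X): there is an
   injective lattice homomorphism L -> FL(X) (FL(X) = terms modulo free_eq). *)
Definition embeds_in_free_lattice (d : Order.disp_t) (L : latticeType d) : Prop :=
  exists (X : Type) (f : L -> lterm X),
    [/\ forall x y : L, free_eq (f (x `|` y)) (LJoin (f x) (f y)),
        forall x y : L, free_eq (f (x `&` y)) (LMeet (f x) (f y)) &
        forall x y : L, free_eq (f x) (f y) -> x = y].

Section Sub.
Context (d : Order.disp_t) (L : latticeType d).

Definition is_sublattice (S : L -> Prop) : Prop :=
  forall x y, S x -> S y -> S (x `|` y) /\ S (x `&` y).

Definition is_convex_in (K S : L -> Prop) : Prop :=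
  forall x y z, S x -> S z -> K y -> x <= y -> y <= z -> S y.

Definition is_distributive_set (S : L -> Prop) : Prop :=
  forall x y z, S x -> S y -> S z -> x `&` (y `|` z) = (x `&` y) `|` (x `&` z).

Definition convex_distributive_sublattice (K S : L -> Prop) : Prop :=
  [/\ (forall x, S x -> K x), is_sublattice S, is_convex_in K S &
      is_distributive_set S].

Definition distributive_partition (K : L -> Prop) (F : (L -> Prop) -> Prop) : Prop :=
  [/\
      (forall B, F B -> exists x, B x),
      (forall B1 B2 x, F B1 -> F B2 -> B1 x -> B2 x -> B1 = B2),
      (forall x, K x -> exists2 B, F B & B x),
      (forall B, F B -> convex_distributive_sublattice K B) &
      (forall B1 B2, F B1 -> F B2 -> B1 <> B2 ->
         let U := fun x => B1 x \/ B2 x in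
         is_sublattice U -> is_convex_in K U ->
         convex_distributive_sublattice K U)].

(* Dec(K) <= |S| for a set S : A -> Prop: some distributive partition of K
   admits an injection of its set of blocks into S. *)
Definition Dec_le (A : Type) (K : L -> Prop) (S : A -> Prop) : Prop :=
  exists (F : (L -> Prop) -> Prop) (g : (L -> Prop) -> A),
    [/\ distributive_partition K F,
        (forall B, F B -> S (g B)) &
        (forall B1 B2, F B1 -> F B2 -> g B1 = g B2 -> B1 = B2)].

End Sub.

From HB Require Import structures.
From mathcomp Require Import all_boot all_order.
From Stdlib Require Import ClassicalEpsilon.
Set Implicit Arguments. Unset Strict Implicit. Unset Printing Implicit Defensive.
Import Order.TTheory.
Local Open Scope order_scope.

(* Fix [a] and send [b] to the pair [(a `|` b, a `&` b)]. This map is monotone,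
   and in the variety N it has the semidistributivity property: elements with
   the same image have joins and meets with that image. So its fibers in [K]
   are convex sublattices. A sublattice on which the map takes only two
   comparable values is distributive, by four inequalities valid in N5; this
   covers single fibers, and also a union of two fibers that is a sublattice,
   since the join of an element of each lies in one of them and so makes the
   two images comparable. The blocks are labelled injectively by their images. *)

Section JoinMeetPair.
Context (d : Order.disp_t) (L : latticeType d).

Lemma meetUr_ge (x y z : L) : (x `&` y) `|` (x `&` z) <= x `&` (y `|` z).
Proof. by rewrite leUx !leI2 ?leUl ?leUr. Qed.

Definition joinmeet (a b : L) : L * L := (a `|` b, a `&` b).

Definition pair_le (p q : L * L) : bool := (p.1 <= q.1) && (p.2 <= q.2).

Lemma pair_le_refl (p : L * L) : pair_le p p.
Proof. by rewrite /pair_le !lexx. Qed.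

Lemma pair_le_anti (p q : L * L) : pair_le p q -> pair_le q p -> p = q.
Proof.
case: p q => [p1 p2] [q1 q2] /andP[/= le1 le2] /andP[/= ge1 ge2].
by rewrite (@le_anti _ _ p1 q1) ?le1 ?ge1 // (@le_anti _ _ p2 q2) ?le2 ?ge2.
Qed.

Lemma le_joinmeet (a x y : L) : x <= y -> pair_le (joinmeet a x) (joinmeet a y).
Proof. by move=> le_xy; rewrite /pair_le leU2 ?leI2. Qed.

Definition distr_witness (a x y z W V : L) : bool :=
  x `&` (y `|` z) `&` (W `|` a) <= ((x `&` y) `|` (x `&` z)) `|` (V `&` a).

Lemma le_distr_of_witness (a x y z W V : L) :
  distr_witness a x y z W V ->
  pair_le (joinmeet a (x `&` (y `|` z))) (joinmeet a W) ->
  pair_le (joinmeet a V) (joinmeet a ((x `&` y) `|` (x `&` z))) ->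
  x `&` (y `|` z) <= (x `&` y) `|` (x `&` z).
Proof.
rewrite /distr_witness => wit /andP[/= joinW _] /andP[_ /= meetV].
have <- : x `&` (y `|` z) `&` (W `|` a) = x `&` (y `|` z).
  by apply/meet_idPl; rewrite [W `|` a]joinC (le_trans _ joinW) ?leUr.
have <- : (x `&` y) `|` (x `&` z) `|` (V `&` a) = (x `&` y) `|` (x `&` z).
  by apply/join_idPl; rewrite [V `&` a]meetC (le_trans meetV) ?leIr.
exact: wit.
Qed.

End JoinMeetPair.

Ltac check_in_N5 :=
  let v := fresh "v" in
  move=> v /=; case: (v 0); case: (v 1); case: (v 2); case: (v 3); reflexivity.

Section VarietyN.
Context (d : Order.disp_t) (L : latticeType d) (HN : in_variety_N L).

Definition valuation4 (x y z a : L) : nat -> L :=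
  fun n => match n with 0 => x | 1 => y | 2 => z | _ => a end.

Notation X := (LVar 0).
Notation Y := (LVar 1).
Notation Z := (LVar 2).
Notation A := (LVar 3).

Lemma N_meet_sd_law (a y z : L) :
  a `&` (y `|` z) = a `&` (y `|` (a `&` (z `|` (a `&` y)))).
Proof.
apply: (@HN (LMeet A (LJoin Y Z)) (LMeet A (LJoin Y (LMeet A (LJoin Z (LMeet A Y)))))
           _ (valuation4 a y z a)); check_in_N5.
Qed.

Lemma N_join_sd_law (a y z : L) :
  a `|` (y `&` z) = a `|` (y `&` (a `|` (z `&` (a `|` y)))).
Proof.
apply: (@HN (LJoin A (LMeet Y Z)) (LJoin A (LMeet Y (LJoin A (LMeet Z (LJoin A Y)))))
           _ (valuation4 a y z a)); check_in_N5.
Qed.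

Lemma meet_semidistr (a x y : L) : a `&` x = a `&` y -> a `&` (x `|` y) = a `&` x.
Proof. by move=> axy; rewrite N_meet_sd_law axy meetKUC -axy meetKUC. Qed.

Lemma join_semidistr (a x y : L) : a `|` x = a `|` y -> a `|` (x `&` y) = a `|` x.
Proof. by move=> axy; rewrite N_join_sd_law axy joinKIC -axy joinKIC. Qed.

Lemma joinmeetU (a x y : L) :
  joinmeet a x = joinmeet a y -> joinmeet a (x `|` y) = joinmeet a x.
Proof.
case=> ax ay; rewrite /joinmeet meet_semidistr //.
by rewrite joinA ax -joinA joinxx.
Qed.

Lemma joinmeetI (a x y : L) :
  joinmeet a x = joinmeet a y -> joinmeet a (x `&` y) = joinmeet a x.
Proof.
case=> ax ay; rewrite /joinmeet join_semidistr //.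
by rewrite meetA ay -meetA meetxx.
Qed.

Notation LHS := (LMeet X (LJoin Y Z)).
Notation RHS := (LJoin (LMeet X Y) (LMeet X Z)).

Lemma N_distr_witness (W V : lterm nat) (x y z a : L) :
  (forall v : nat -> n5,
     teval n5_join n5_meet v (LMeet (LMeet LHS (LJoin W A)) (LJoin RHS (LMeet V A))) =
     teval n5_join n5_meet v (LMeet LHS (LJoin W A))) ->
  distr_witness a x y z (lat_eval (valuation4 x y z a) W)
                        (lat_eval (valuation4 x y z a) V).
Proof. by move=> N5law; apply/meet_idPl; exact: (HN N5law (valuation4 x y z a)). Qed.

Lemma N_witness_meetxy_joinxz (x y z a : L) :
  distr_witness a x y z (x `&` y) (x `|` z).
Proof. by refine (@N_distr_witness (LMeet X Y) (LJoin X Z) x y z a _); check_in_N5. Qed.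

Lemma N_witness_meetxz_joinxy (x y z a : L) :
  distr_witness a x y z (x `&` z) (x `|` y).
Proof.
move: (N_witness_meetxy_joinxz x z y a).
by rewrite /distr_witness joinC [_ `|` (x `&` y)]joinC.
Qed.

Lemma N_witness_meetyz_x (x y z a : L) : distr_witness a x y z (y `&` z) x.
Proof. by refine (@N_distr_witness (LMeet Y Z) X x y z a _); check_in_N5. Qed.

Lemma N_witness_meetxy_joinyz (x y z a : L) :
  distr_witness a x y z (x `&` y) (y `|` z).
Proof. by refine (@N_distr_witness (LMeet X Y) (LJoin Y Z) x y z a _); check_in_N5. Qed.

Section TwoLevels.
Variables (a : L) (U : L -> Prop) (p1 p2 : L * L).
Hypotheses (le_p12 : pair_le p1 p2) (U_sub : is_sublattice U)
  (U_levels : forall w, U w -> joinmeet a w = p1 \/ joinmeet a w = p2).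

Lemma sub_join v w : U v -> U w -> U (v `|` w).
Proof. by move=> Uv Uw; case: (U_sub Uv Uw). Qed.

Lemma sub_meet v w : U v -> U w -> U (v `&` w).
Proof. by move=> Uv Uw; case: (U_sub Uv Uw). Qed.

#[local] Hint Resolve sub_join sub_meet : core.

Definition upper (w : L) : bool := joinmeet a w == p2.

Lemma joinmeet_upper w : U w -> joinmeet a w = if upper w then p2 else p1.
Proof. by rewrite /upper => /U_levels[]->; rewrite ?eqxx //; case: eqP. Qed.

Lemma upper_mono v w : U v -> U w -> v <= w -> upper v -> upper w.
Proof.
move=> Uv Uw le_vw /eqP jm_v; apply/eqP.
have := le_joinmeet a le_vw; rewrite jm_v.
by have [->|->] := U_levels Uw => // le_p21; apply: pair_le_anti.
Qed.

Lemma upperU v w : U v -> U w -> upper (v `|` w) = upper v || upper w.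
Proof.
move=> Uv Uw; have Uvw := sub_join Uv Uw.
case uv: (upper v); first by apply: upper_mono uv; rewrite ?leUl.
case uw: (upper w); first by apply: upper_mono uw; rewrite ?leUr.
have jm_vw : joinmeet a v = joinmeet a w by rewrite !joinmeet_upper ?uv ?uw.
by rewrite /upper joinmeetU // -/(upper v) uv.
Qed.

Lemma upperI v w : U v -> U w -> upper (v `&` w) = upper v && upper w.
Proof.
move=> Uv Uw; have Uvw := sub_meet Uv Uw.
case uv: (upper v); last first.
  by apply/negbTE/negP => /(upper_mono Uvw Uv (leIl _ _)); rewrite uv.
case uw: (upper w); last first.
  by apply/negbTE/negP => /(upper_mono Uvw Uw (leIr _ _)); rewrite uw.
have jm_vw : joinmeet a v = joinmeet a w by rewrite !joinmeet_upper ?uv ?uw.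
by rewrite /upper joinmeetI // -/(upper v) uv.
Qed.

Lemma distributive_two_levels : is_distributive_set U.
Proof.
move=> x y z Ux Uy Uz.
have le_upper v w : U v -> U w -> upper v ==> upper w ->
    pair_le (joinmeet a v) (joinmeet a w).
  move=> Uv Uw; rewrite !joinmeet_upper //.
  by case: (upper v); case: (upper w); rewrite ?pair_le_refl.
apply/le_anti; rewrite meetUr_ge andbT.
(* [upper] is a lattice morphism onto bool, so in each of the eight level
   patterns of [x, y, z] it suffices to pick a witness whose [W] is no lower
   than [x `&` (y `|` z)] and whose [V] is no higher than its expansion. *)
case ux: (upper x); case uy: (upper y); case uz: (upper z);
  [ apply: (le_distr_of_witness (N_witness_meetxy_joinxz x y z a))
  | apply: (le_distr_of_witness (N_witness_meetxy_joinxz x y z a))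
  | apply: (le_distr_of_witness (N_witness_meetxz_joinxy x y z a))
  | apply: (le_distr_of_witness (N_witness_meetxy_joinyz x y z a))
  | apply: (le_distr_of_witness (N_witness_meetyz_x x y z a))
  | apply: (le_distr_of_witness (N_witness_meetxy_joinxz x y z a))
  | apply: (le_distr_of_witness (N_witness_meetxz_joinxy x y z a))
  | apply: (le_distr_of_witness (N_witness_meetxy_joinxz x y z a)) ];
  by apply: le_upper; rewrite ?(upperI, upperU) ?ux ?uy ?uz; auto.
Qed.

End TwoLevels.

Section Fibers.
Variables (K : L -> Prop) (a : L).

Definition fiber (p : L * L) : L -> Prop := fun x => K x /\ joinmeet a x = p.

Lemma fiber_sublattice p : is_sublattice K -> is_sublattice (fiber p).
Proof.
move=> K_sub x y [Kx jm_x] [Ky jm_y].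
have jm_xy : joinmeet a x = joinmeet a y by rewrite jm_x jm_y.
have [KU KI] := K_sub x y Kx Ky.
by split; split; rewrite ?joinmeetU ?joinmeetI.
Qed.

Lemma fiber_convex p : is_convex_in K (fiber p).
Proof.
move=> x y z [_ jm_x] [_ jm_z] Ky le_xy le_yz; split=> //.
apply: pair_le_anti.
  by rewrite -jm_z le_joinmeet.
by rewrite -jm_x le_joinmeet.
Qed.

Lemma fiber_convex_distributive p :
  is_sublattice K -> convex_distributive_sublattice K (fiber p).
Proof.
move=> K_sub; split.
- by move=> x [].
- exact: fiber_sublattice.
- exact: fiber_convex.
- apply: (@distributive_two_levels a _ p p); first exact: pair_le_refl.
    exact: fiber_sublattice.
  by move=> w [_ ->]; left.
Qed.

Lemma fiber_union_distributive p q b1 b2 : fiber p b1 -> fiber q b2 ->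
  let U := fun x => fiber p x \/ fiber q x in
  is_sublattice U -> is_distributive_set U.
Proof.
move=> Fb1 Fb2 U U_sub.
have le_p : pair_le p (joinmeet a (b1 `|` b2)).
  by case: Fb1 => _ <-; rewrite le_joinmeet ?leUl.
have le_q : pair_le q (joinmeet a (b1 `|` b2)).
  by case: Fb2 => _ <-; rewrite le_joinmeet ?leUr.
have [[_ jm_b12] | [_ jm_b12]] := (U_sub _ _ (or_introl Fb1) (or_intror Fb2)).1.
- apply: (@distributive_two_levels a _ q p); rewrite -?jm_b12 //.
  by move=> w [[_ ->] | [_ ->]]; [right | left].
- apply: (@distributive_two_levels a _ p q); rewrite -?jm_b12 //.
  by move=> w [[_ ->] | [_ ->]]; [left | right].
Qed.

Definition fibers (B : L -> Prop) : Prop := exists2 b, K b & B = fiber (joinmeet a b).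

Lemma fibers_distributive_partition :
  is_sublattice K -> distributive_partition K fibers.
Proof.
move=> K_sub; split.
- by move=> B [b Kb ->]; exists b.
- by move=> B1 B2 x [b1 _ ->] [b2 _ ->] [_ <-] [_ <-].
- by move=> x Kx; exists (fiber (joinmeet a x)); [exists x | split].
- by move=> B [b _ ->]; apply: fiber_convex_distributive.
- move=> B1 B2 [b1 Kb1 ->] [b2 Kb2 ->] _ U U_sub U_convex; split=> //.
    by move=> x [[]|[]].
  exact: (@fiber_union_distributive _ _ b1 b2).
Qed.

End Fibers.

End VarietyN.

Theorem theorem5p2 (d : Order.disp_t) (L : latticeType d)
  (HN : in_variety_N L) (Hfree : embeds_in_free_lattice L)
  (K : L -> Prop) (HK : is_sublattice K) (a : L)
  (Ha : forall b, K b -> ~~ (a >=< b)) :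
  Dec_le K (fun p : L * L =>
              (exists2 b, K b & p.1 = a `|` b) /\ (exists2 b, K b & p.2 = a `&` b)).
Proof.
have inh : inhabited (L * L) := inhabits (a, a).
pose label B := epsilon inh (fun p => B = fiber K a p).
have labelP B : fibers K a B -> B = fiber K a (label B).
  case=> b _ ->; apply: (epsilon_spec inh (fun p => _ = fiber K a p)).
  by exists (joinmeet a b).
exists (fibers K a), label; split.
- exact: fibers_distributive_partition.
- move=> B FB; have [b Kb eB] := FB.
  have [_ <-] : fiber K a (label B) b by rewrite -labelP // eB.
  by split; exists b.
- by move=> B1 B2 /labelP e1 /labelP e2 e12; rewrite e1 e2 e12.
Qed.
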